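(* For a $G$-space $X$, $\mathrm{cat}^{G,\infty}(X)=0$ if and only if $\mathrm{TC}^{G,\infty}(X)=0$.
   Context: All spaces are well-pointed CW complexes, $G$ a topological group acting cellularly; $x_0\in X$ is the base point. $PX$ is the path space; $\mathcal{P}_k(X)=\{(\gamma_1,\dots,\gamma_k)\in(PX)^k\mid G\gamma_i(1)=G\gamma_{i+1}(0),\ 1\le i\le k-1\}$, $\pi_k(\gamma_1,\dots,\gamma_k)=(\gamma_1(0),\gamma_k(1))\in X\times X$. $\mathrm{secat}$ is the reduced sectional category (least $n$ such that the base is covered by $n+1$ open sets each admitting a homotopy section). $\mathrm{TC}^{G,k}(X)=\mathrm{secat}(\pi_k)$, $\mathrm{TC}^{G,\infty}(X)=\min_k\mathrm{TC}^{G,k}(X)$. $P^k_*(X)=\{(\gamma_1,\dots,\gamma_k)\in\mathcal{P}_k(X)\mid\gamma_1(0)=x_0\}$, $q_k(\gamma_1,\dots,\gamma_k)=\gamma_k(1)$, $\mathrm{cat}^{G,k}(X)=\mathrm{secat}(q_k)$, $\mathrm{cat}^{G,\infty}(X)=\min_k\mathrm{cat}^{G,k}(X)$. *)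

From HB Require Import structures.
From mathcomp Require Import all_boot all_order all_algebra.
From mathcomp Require Import all_classical all_reals.
From mathcomp Require Import topology.
From mathcomp Require Import Rstruct Rstruct_topology.
From Stdlib Require Import Rdefinitions.

Set Implicit Arguments.
Unset Strict Implicit.
Unset Printing Implicit Defensive.

Import Order.TTheory GRing.Theory Num.Theory.
Local Open Scope classical_set_scope.
Local Open Scope ring_scope.

Definition I01 : Type := set_type (`[0%R, 1%R]%classic : set R).

Lemma zero_in_I01 : (0%R : R) \in (`[0%R, 1%R]%classic : set R).
Proof. by rewrite inE /= in_itv /= lexx ler01. Qed.
Lemma one_in_I01 : (1%R : R) \in (`[0%R, 1%R]%classic : set R).
Proof. by rewrite inE /= in_itv /= lexx ler01. Qed.

Definition i0 : I01 := exist _ 0%R zero_in_I01.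
Definition i1 : I01 := exist _ 1%R one_in_I01.

Record Gspace (G X : topologicalType) := {
  gmul : G -> G -> G;
  ginv : G -> G;
  gone : G;
  act  : G -> X -> X;
  gmulA : forall a b c, gmul a (gmul b c) = gmul (gmul a b) c;
  gmul1 : forall a, gmul gone a = a /\ gmul a gone = a;
  gmulV : forall a, gmul (ginv a) a = gone /\ gmul a (ginv a) = gone;
  gmul_cont : continuous (fun p : G * G => gmul p.1 p.2);
  ginv_cont : continuous ginv;
  act1 : forall x, act gone x = x;
  actM : forall a b x, act (gmul a b) x = act a (act b x);
  act_cont : continuous (fun p : G * X => act p.1 p.2)
}.

Definition same_orbit (G X : topologicalType) (A : Gspace G X) (a b : X) :=
  exists g : G, act A g a = b.

(** The ambient function space of the path space P X, with the compact-open
    topology; P X is the subspace of its continuous elements. *)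
Definition PathAmb (X : topologicalType) := {compact-open, I01 -> X}.
Definition is_path (X : topologicalType) (f : PathAmb X) :=
  continuous (f : I01 -> X).

(** P_k(X) as a subset of (P X)^k  (tuples indexed by 'I_k, k >= 1). *)
Definition Pk (G X : topologicalType) (A : Gspace G X) (k : nat)
    (g : 'I_k.+1 -> PathAmb X) : Prop :=
  (forall i, is_path (g i)) /\
  (forall i : 'I_k,
      same_orbit A ((g (widen_ord (leqnSn k) i) : I01 -> X) i1)
                   ((g (lift ord0 i) : I01 -> X) i0)).

Definition pik (X : topologicalType) (k : nat) (g : 'I_k.+1 -> PathAmb X)
  : X * X := ((g ord0 : I01 -> X) i0, (g ord_max : I01 -> X) i1).
Definition qk (X : topologicalType) (k : nat) (g : 'I_k.+1 -> PathAmb X)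
  : X := (g ord_max : I01 -> X) i1.

(** Continuity of a map into
    the subspace E of the product is continuity of every component. *)
Definition hsection (X B : topologicalType) (k : nat)
    (E : set ('I_k.+1 -> PathAmb X)) (p : ('I_k.+1 -> PathAmb X) -> B)
    (U : set B) : Prop :=
  exists s : B -> 'I_k.+1 -> PathAmb X,
    (forall i, {within U, continuous (fun b => s b i)}) /\
    (forall b, U b -> E (s b)) /\
    exists H : B * I01 -> B,
      {within U `*` [set: I01], continuous H} /\
      (forall b, U b -> H (b, i0) = p (s b) /\ H (b, i1) = b).

Definition secat_le (X B : topologicalType) (k : nat)
    (E : set ('I_k.+1 -> PathAmb X)) (p : ('I_k.+1 -> PathAmb X) -> B)
    (n : nat) : Prop :=
  exists V : 'I_n.+1 -> set B,
    (forall j, open (V j)) /\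
    (forall b, exists j, V j b) /\
    (forall j, hsection E p (V j)).

Definition secat_is (X B : topologicalType) (k : nat)
    (E : set ('I_k.+1 -> PathAmb X)) (p : ('I_k.+1 -> PathAmb X) -> B)
    (n : nat) : Prop :=
  secat_le E p n /\ (forall m, secat_le E p m -> leq n m).

(** TC^{G,k}(X) = n, for k = k'.+1 >= 1 *)
Definition TCk_is (G X : topologicalType) (A : Gspace G X) (k' n : nat) :=
  secat_is (@Pk G X A k') (@pik X k') n.

Definition Pk_star (G X : topologicalType) (A : Gspace G X) (x0 : X)
    (k : nat) : set ('I_k.+1 -> PathAmb X) :=
  [set g | Pk A g /\ (g ord0 : I01 -> X) i0 = x0].

Definition catk_is (G X : topologicalType) (A : Gspace G X) (x0 : X)
    (k' n : nat) :=
  secat_is (@Pk_star G X A x0 k') (@qk X k') n.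

Definition TCinf_is (G X : topologicalType) (A : Gspace G X) (n : nat) :=
  (exists k', TCk_is A k' n) /\
  (forall k' m, TCk_is A k' m -> leq n m).

Definition catinf_is (G X : topologicalType) (A : Gspace G X) (x0 : X)
    (n : nat) :=
  (exists k', catk_is A x0 k' n) /\
  (forall k' m, catk_is A x0 k' m -> leq n m).

From mathcomp Require Import all_boot all_order all_algebra all_classical all_reals topology.
From mathcomp Require Import Rstruct_topology normedtype zify.
From Stdlib Require Import Rdefinitions.

(* Both invariants vanish exactly when, for some k, the corresponding map has
   a homotopy section over the whole base.  A global section s of pi_(k+1),
   restricted to {x0} x X, becomes a section of q_(k+2) once it is preceded by
   the path from x0 traced backwards by the first coordinate of the homotopy.
   Conversely, if s is a global section of q_(k+1), then, since all chains
   s(a) start at x0, the chain s(a) run backwards followed by s(b) is an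
   admissible chain of 2k+2 paths from the end of s(a) to the end of s(b),
   and the two homotopies of the ends run side by side. *)

Set Implicit Arguments.
Unset Strict Implicit.
Unset Printing Implicit Defensive.
Import GRing.Theory Num.Theory.
Local Open Scope classical_set_scope.

Section ContinuityCombinators.
Variables T U V : topologicalType.

Lemma continuous_fst : continuous (@fst U V).
Proof. by move=> z; exact: cvg_fst. Qed.

Lemma continuous_snd : continuous (@snd U V).
Proof. by move=> z; exact: cvg_snd. Qed.

Lemma continuous_pair (f : T -> U) (g : T -> V) :
  continuous f -> continuous g -> continuous (fun z => (f z, g z)).
Proof. by move=> cf cg z; apply: cvg_pair; [exact: cf | exact: cg]. Qed.

Lemma continuous_compose (f : T -> U) (g : U -> V) :
  continuous f -> continuous g -> continuous (g \o f).
Proof. by move=> cf cg z; apply: continuous_comp; [exact: cf | exact: cg]. Qed.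

End ContinuityCombinators.

Lemma continuous_precomp (X : topologicalType) (phi : I01 -> I01) :
  continuous phi ->
  continuous (fun f : PathAmb X => ((f : I01 -> X) \o phi : PathAmb X)).
Proof.
move=> cphi f; apply/compact_open_cvgP; first by apply: fmap_filter; exact: nbhs_filter.
move=> K O cK oO fKO.
have cphiK : compact (phi @` K).
  by apply: continuous_compact => //; exact: continuous_subspaceT.
have : nbhs f [set g : PathAmb X | g @` (phi @` K) `<=` O].
  apply: open_nbhs_nbhs; split; first exact: compact_open_open.
  by move=> _ [_ [k Kk <-] <-]; apply: fKO; exists k.
apply: filterS => g gO _ [k Kk <-]; apply: gO; exists (phi k) => //; exists k.
Qed.

Section Reversal.
Local Open Scope ring_scope.

Lemma revI_mem (t : I01) : (1 - val t : R) \in (`[0%R, 1%R]%classic : set R).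
Proof.
case: t => /= x; rewrite !inE /= !in_itv /= => /andP[x_ge0 x_le1].
by apply/andP; split; rewrite ?subr_ge0 // lerBlDr lerDl.
Qed.

Definition revI (t : I01) : I01 := exist _ (1 - val t) (revI_mem t).

Lemma continuous_revI : continuous revI.
Proof.
apply: (@continuous_comp_initial _ _ _ set_val) => t.
have -> : set_val \o revI = (fun x : R => 1 - x) \o set_val by [].
apply: continuous_comp; first exact: initial_continuous.
by apply: (@cvgB _ R^o); [exact: cvg_cst | exact: cvg_id].
Qed.

Lemma revI0 : revI i0 = i1.
Proof. by apply: val_inj; rewrite /= subr0. Qed.

Lemma revI1 : revI i1 = i0.
Proof. by apply: val_inj; rewrite /= subrr. Qed.

Variable X : topologicalType.

Definition path_rev (f : PathAmb X) : PathAmb X := (f : I01 -> X) \o revI.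

Lemma continuous_path_rev : continuous path_rev.
Proof. exact: continuous_precomp continuous_revI. Qed.

Lemma is_path_rev f : is_path f -> is_path (path_rev f).
Proof. by move=> cf; apply: continuous_compose => //; exact: continuous_revI. Qed.

Lemma path_rev0 f : (path_rev f : I01 -> X) i0 = (f : I01 -> X) i1.
Proof. by rewrite /path_rev /= revI0. Qed.

Lemma path_rev1 f : (path_rev f : I01 -> X) i1 = (f : I01 -> X) i0.
Proof. by rewrite /path_rev /= revI1. Qed.

End Reversal.

Section GlobalSections.
Variables X B : topologicalType.

Definition global_hsection (k : nat) (E : set ('I_k.+1 -> PathAmb X))
    (p : ('I_k.+1 -> PathAmb X) -> B) :=
  exists s : B -> 'I_k.+1 -> PathAmb X,
    (forall i, continuous (fun b => s b i)) /\
    (forall b, E (s b)) /\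
    exists H : B * I01 -> B, continuous H /\
      (forall b, H (b, i0) = p (s b) /\ H (b, i1) = b).

Lemma secat_le0P k (E : set ('I_k.+1 -> PathAmb X))
    (p : ('I_k.+1 -> PathAmb X) -> B) :
  secat_le E p 0 <-> global_hsection E p.
Proof.
split=> [[V [_ [covV secV]]]|[s [cs [Es [H [cH hH]]]]]].
  have VT : V ord0 = setT.
    by apply/seteqP; split=> // b _; have [j] := covV b; rewrite (ord1 j).
  have [s [cs [Es [H [cH hH]]]]] := secV ord0; rewrite VT setXTT in cs Es cH hH.
  exists s; split=> [i|]; first by apply/continuous_subspace_setT.
  split=> [b|]; first exact: Es.
  by exists H; split=> [|b]; [apply/continuous_subspace_setT | exact: hH].
exists (fun _ => setT); split=> [_|]; first exact: openT.
split=> [b|j]; first by exists ord0.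
exists s; split=> [i|]; first exact: (continuous_subspace_setT _).1.
split=> [b _|]; first exact: Es.
exists H; rewrite setXTT; split=> [|b _]; last exact: hH.
exact: (continuous_subspace_setT _).1.
Qed.

Lemma min_secat0P (E : forall k, set ('I_k.+1 -> PathAmb X))
    (p : forall k, ('I_k.+1 -> PathAmb X) -> B) :
  ((exists k, secat_is (E k) (p k) 0) /\
   (forall k m, secat_is (E k) (p k) m -> 0 <= m)) <->
  exists k, global_hsection (E k) (p k).
Proof.
split=> [[[k [sec0 _]] _]|[k sec]]; first by exists k; exact/secat_le0P.
by split=> //; exists k; split=> //; exact/secat_le0P.
Qed.

End GlobalSections.

Section Chains.
Variables (G X : topologicalType) (A : Gspace G X).

Lemma same_orbit_refl x : same_orbit A x x.
Proof. by exists (gone A); rewrite act1. Qed.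

Lemma same_orbit_sym x y : same_orbit A x y -> same_orbit A y x.
Proof.
by move=> [g <-]; exists (ginv A g); rewrite -actM (proj1 (gmulV A g)) act1.
Qed.

Lemma Pk_same_orbit k (s : 'I_k.+1 -> PathAmb X) j : Pk A s -> j < k ->
  same_orbit A ((s (inord j) : I01 -> X) i1) ((s (inord j.+1) : I01 -> X) i0).
Proof.
move=> [_ s_orb] jk; have := s_orb (Ordinal jk).
by congr (same_orbit A ((s _ : I01 -> X) _) ((s _ : I01 -> X) _));
  apply: val_inj; rewrite /= inordK //; lia.
Qed.

Lemma inord_max k : inord k = ord_max :> 'I_k.+1.
Proof. by apply: val_inj; rewrite /= inordK. Qed.

Lemma inord_zero k : inord 0 = ord0 :> 'I_k.+1.
Proof. by apply: val_inj; rewrite /= inordK. Qed.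

Definition chain_cons k (p : PathAmb X) (s : 'I_k.+1 -> PathAmb X)
    (i : 'I_k.+2) : PathAmb X :=
  if val i is j.+1 then s (inord j) else p.

Lemma Pk_chain_cons k p (s : 'I_k.+1 -> PathAmb X) :
  is_path p -> Pk A s -> (p : I01 -> X) i1 = (s ord0 : I01 -> X) i0 ->
  Pk A (chain_cons p s).
Proof.
move=> p_path [s_path s_orb] p_s.
split=> [[[|j] ij]|[[|j] ij]]; rewrite /chain_cons /=.
- exact: p_path.
- exact: s_path.
- by rewrite add0n inord_zero -p_s; exact: same_orbit_refl.
- by rewrite add0n; apply: Pk_same_orbit.
Qed.

Lemma qk_chain_cons k p (s : 'I_k.+1 -> PathAmb X) :
  qk (chain_cons p s) = qk s.
Proof. by rewrite /qk /chain_cons /= inord_max. Qed.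

(* The chain [rev t_k; ...; rev t_0; u_0; ...; u_k]. *)
Definition chain_revcat k (t u : 'I_k.+1 -> PathAmb X)
    (i : 'I_(k + k.+1).+1) : PathAmb X :=
  if val i <= k then path_rev (t (inord (k - val i)))
  else u (inord (val i - k.+1)).

Lemma Pk_chain_revcat k (t u : 'I_k.+1 -> PathAmb X) :
  Pk A t -> Pk A u -> (t ord0 : I01 -> X) i0 = (u ord0 : I01 -> X) i0 ->
  Pk A (chain_revcat t u).
Proof.
move=> Pt Pu tu0; split=> i; rewrite /chain_revcat.
  case: ifP=> _; last exact: Pu.1.
  by apply: is_path_rev; exact: Pt.1.
rewrite /= /bump leq0n add1n.
have ik : i < k + k.+1 := ltn_ord i.
case: (ltngtP i k) => [ik'|ki|->].
- rewrite path_rev1 path_rev0 (_ : k - i = (k - i.+1).+1); last by lia.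
  by apply: same_orbit_sym; apply: Pk_same_orbit => //; lia.
- rewrite (_ : i.+1 - k.+1 = (i - k.+1).+1); last by lia.
  by apply: Pk_same_orbit => //; lia.
- by rewrite !subnn path_rev1 !inord_zero tu0; exact: same_orbit_refl.
Qed.

Lemma pik_chain_revcat k (t u : 'I_k.+1 -> PathAmb X) :
  pik (chain_revcat t u) = (qk t, qk u).
Proof.
rewrite /pik /qk /chain_revcat /= subn0 addnK path_rev0 inord_max.
by have -> : (k + k.+1 <= k) = false by lia.
Qed.

End Chains.

Section SectionTransfer.
Variables (G X : topologicalType) (A : Gspace G X) (x0 : X).

Lemma global_hsection_pik_qk k :
  global_hsection (@Pk G X A k) (@pik X k) ->
  global_hsection (@Pk_star G X A x0 k.+1) (@qk X k.+1).
Proof.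
move=> [s [cs [Es [H [cH hH]]]]].
have cH_at_x0 (phi : I01 -> I01) : continuous phi ->
    continuous (fun bt : X * I01 => H ((x0, bt.1), phi bt.2)).
  move=> cphi; apply: (continuous_compose _ cH); apply: continuous_pair.
    by apply: continuous_pair; [move=> ?; exact: cvg_cst | exact: continuous_fst].
  exact: continuous_compose (@continuous_snd _ _) cphi.
pose F (bt : X * I01) := (H ((x0, bt.1), revI bt.2)).1.
have [cp p_path] : continuous (fun b => (fun t => F (b, t)) : PathAmb X) /\
    forall b, is_path ((fun t => F (b, t)) : PathAmb X).
  apply: continuous_curry; apply: continuous_compose (@continuous_fst _ _).
  exact: cH_at_x0 continuous_revI.
have cs_x0 i : continuous (fun b => s (x0, b) i).
  apply: (@continuous_compose _ _ _ (pair x0) (s^~ i) _ (cs i)).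
  by apply: continuous_pair => [?|?]; [exact: cvg_cst | exact: cvg_id].
exists (fun b => chain_cons (fun t => F (b, t)) (s (x0, b))); split.
  by move=> [[|j] ij] /=; [exact: cp | exact: cs_x0].
split=> [b|].
  have [H0 H1] := hH (x0, b).
  split; last by rewrite /chain_cons /= /F revI0 H1.
  apply: Pk_chain_cons; [exact: p_path | exact: Es |].
  by rewrite /F revI1 H0.
exists (fun bt => (H ((x0, bt.1), bt.2)).2); split.
  exact: continuous_compose (cH_at_x0 id (fun _ => cvg_id)) (@continuous_snd _ _).
by move=> b; have [H0 H1] := hH (x0, b); rewrite /= H0 H1 qk_chain_cons.
Qed.

Lemma global_hsection_qk_pik k :
  global_hsection (@Pk_star G X A x0 k) (@qk X k) ->
  global_hsection (@Pk G X A (k + k.+1)) (@pik X (k + k.+1)).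
Proof.
move=> [s [cs [Es [H [cH hH]]]]].
have cs_proj (pr : X * X -> X) i : continuous pr ->
    continuous (fun ab => s (pr ab) i).
  by move=> cpr; exact: continuous_compose cpr (cs i).
exists (fun ab => chain_revcat (s ab.1) (s ab.2)); split.
  move=> i; rewrite /chain_revcat; case: (val i <= k); last first.
    exact: cs_proj (@continuous_snd _ _).
  apply: continuous_compose (@continuous_path_rev _).
  exact: cs_proj (@continuous_fst _ _).
split=> [[a b]|].
  have [Pa a0] := Es a; have [Pb b0] := Es b.
  by apply: Pk_chain_revcat => //; rewrite a0 b0.
have cH_proj (pr : X * X -> X) : continuous pr ->
    continuous (fun abt : (X * X) * I01 => H (pr abt.1, abt.2)).
  move=> cpr; apply: (continuous_compose _ cH).
  apply: continuous_pair; last exact: continuous_snd.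
  exact: continuous_compose (@continuous_fst _ _) cpr.
exists (fun abt => (H (abt.1.1, abt.2), H (abt.1.2, abt.2))); split.
  apply: continuous_pair; first exact: cH_proj (@continuous_fst _ _).
  exact: cH_proj (@continuous_snd _ _).
move=> [a b] /=; have [Ha0 Ha1] := hH a; have [Hb0 Hb1] := hH b.
by rewrite pik_chain_revcat Ha0 Ha1 Hb0 Hb1.
Qed.

End SectionTransfer.

Theorem mainTheorem7 (G X : topologicalType) (A : Gspace G X) (x0 : X) :
  catinf_is A x0 0 <-> TCinf_is A 0.
Proof.
have catP := min_secat0P (fun k => @Pk_star G X A x0 k) (fun k => @qk X k).
have TCP := min_secat0P (fun k => @Pk G X A k) (fun k => @pik X k).
split=> [/catP [k sec]|/TCP [k sec]].
- by apply/TCP; exists (k + k.+1); exact: global_hsection_qk_pik sec.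
- by apply/catP; exists k.+1; exact: global_hsection_pik_qk sec.
Qed.
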